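(* Let $K\ge 4$ be even and let $\bar t:=K-t$ be even with $2\le \bar t\le K/2$, where $t=KM/N$. Then the D2D coded caching rate $R=N/M-1$ is achievable with some subpacketization $F$ satisfying $F\le F_{\rm JCM}$ and $$\frac{F}{F_{\rm JCM}}\le \min\Big\{\frac{1}{t}\prod_{i=1}^{\bar t/2}(2i-1),\;1\Big\}.$$
   Context: D2D coded caching setting: there are $N\ge 1$ files $W_1,\dots,W_N$ and $K\ge 2$ users, each with a cache of size $M$ files, $0<M\le N$, and $t:=KM/N$ is assumed to be a positive integer. A D2D coded caching scheme with (uncoded placement and) subpacketization $F\in\mathbb{N}_+$ is defined as follows. Fix a packet size $b\ge 1$; each file is a sequence of $F$ packets $W_n=(W_n^{(1)},\dots,W_n^{(F)})$, $W_n^{(j)}\in\{0,1\}^b$. Placement: each user $k\in[K]$ stores the packets $\{W_n^{(j)}:(n,j)\in Z_k\}$ for a fixed index set $Z_k\subseteq[N]\times[F]$ with $|Z_k|\le MF$ (independent of demands and file contents). Delivery: for every demand vector $\mathbf d=(d_1,\dots,d_K)\in[N]^K$, each user $k$ broadcasts to all other users $\ell_k(\mathbf d)\in\mathbb{N}$ blocks in $\{0,1\}^b$, each a deterministic function of the packets stored by user $k$; it is required that for all file contents each user $k$ can recover all $F$ packets of $W_{d_k}$ from its stored packets and the blocks sent by the other users. The rate is $R=\max_{\mathbf d}\frac{1}{F}\sum_{k=1}^K\ell_k(\mathbf d)$ (transmitted bits normalized by the file size $Fb$). The rate $R$ is achievable with subpacketization $F$ if such a scheme with rate $R$ exists for every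 packet size $b\ge 1$. Define $F_{\rm JCM}:=t\binom{K}{t}$. *)

From mathcomp Require Import all_boot all_order all_algebra.
Set Implicit Arguments. Unset Strict Implicit. Unset Printing Implicit Defensive.
Import Order.TTheory GRing.Theory Num.Theory.

Definition block (b : nat) := (b.-tuple bool)%type.

(* File contents: W n j = j-th packet of file n. *)
Definition library (N F b : nat) := 'I_N -> 'I_F -> block b.

(* What a user with index set Z has stored: the packet at (n,j) if (n,j) \in Z,
   nothing otherwise. Encoders/decoders only see this, so they are deterministic
   functions of the stored packets. *)
Definition cache_of (N F b : nat) (Z : {set 'I_N * 'I_F}) (W : library N F b)
  : 'I_N * 'I_F -> option (block b) :=
  fun p => if p \in Z then Some (W p.1 p.2) else None.

Definition demand (N K : nat) := {ffun 'I_K -> 'I_N}.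

Record D2D_scheme (N K F b : nat) := {
  Zset : 'I_K -> {set 'I_N * 'I_F};
  ell : demand N K -> 'I_K -> nat;
  enc : demand N K -> 'I_K -> ('I_N * 'I_F -> option (block b)) -> seq (block b);
  dec : demand N K -> 'I_K -> ('I_N * 'I_F -> option (block b)) ->
        ('I_K -> seq (block b)) -> 'I_F -> block b
}.

(* Validity: cache constraint |Z_k| <= M F; user k broadcasts exactly ell d k
   blocks; user k decodes W_{d_k} from its cache and the broadcasts of the
   other users (its own slot is replaced by the empty sequence). *)
Definition valid_scheme (N K : nat) (M : rat) (F b : nat)
  (S : D2D_scheme N K F b) : Prop :=
  [/\ forall k : 'I_K, (#|Zset S k|%:R <= M * F%:R :> rat)%R,
      forall (d : demand N K) (k : 'I_K) (W : library N F b),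
        size (enc S d k (cache_of (Zset S k) W)) = ell S d k
    & forall (d : demand N K) (k : 'I_K) (W : library N F b) (j : 'I_F),
        dec S d k (cache_of (Zset S k) W)
          (fun k' => if k' == k then [::] else enc S d k' (cache_of (Zset S k') W)) j
        = W (d k) j ].

Definition scheme_rate (N K F b : nat) (S : D2D_scheme N K F b) : rat :=
  ((\max_(d : demand N K) \sum_(k < K) ell S d k)%:R / F%:R)%R.

Definition achievable (N K : nat) (M : rat) (F : nat) (R : rat) : Prop :=
  0 < F /\
  forall b : nat, 0 < b ->
    exists S : D2D_scheme N K F b, valid_scheme M S /\ scheme_rate S = R.

Definition F_JCM (K t : nat) : nat := t * 'C(K, t).

From HB Require Import structures.
From mathcomp Require Import all_boot all_order all_algebra.
From mathcomp Require Import zify ring.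
Import Order.TTheory GRing.Theory Num.Theory.
Set Implicit Arguments. Unset Strict Implicit. Unset Printing Implicit Defensive.

(* Both schemes are instances of one delivery frame. A packet of a file is labelled by the set S
   of the tbar = K - t users that do not cache it, and npk S packets of each file carry the label S.
   For every set C of tbar - 1 users, some senders outside C each broadcast rounds C XORs; the XOR
   that s sends in round r combines, over all users k outside C other than s, one packet labelled
   k |: C of the file k requests. The sender caches every summand and k caches all but its own, so
   k decodes as soon as the senders of C other than k jointly send it exactly npk (k |: C) XORs.
   Double counting then gives the load tbar F / (K - tbar), i.e. rate N/M - 1, and invariance of npk
   under cyclic shifts gives every user a cache of M F packets.
   With npk S = K - tbar and all users outside C as senders this is the scheme of size F_JCM. For
   K = 2H, pair user x with x + H mod K; let npk S depend only on the number 2i of users of S whose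
   partner is not in S, and let the senders of C be the partners of such users of C. With tbar = 2h,
   npk = 1.3...(2i-1).(2i)(2i+2)...(2h-2) satisfies the counting condition, and as i <= h this gives
   F <= C(K, t).1.3...(2h-1). The theorem takes the better of the two schemes. *)

Lemma sum_ord_lt_const n m a : m <= n -> \sum_(l < n | l < m) a = m * a.
Proof. by move=> le_mn; rewrite (big_ord_narrow le_mn) sum_nat_const card_ord. Qed.

Lemma sum_card_setD1 (T : finType) (A B : {set T}) :
  A \subset B -> \sum_(k in B) #|A :\ k| = #|A| * #|B|.-1.
Proof.
move=> sAB.
have sum_in : \sum_(k in B) (k \in A : nat) = #|A|.
  rewrite -sum1_card (eq_bigr (fun k => if k \in A then 1 else 0)) => [|k _]; last first.
    by case: (k \in A).
  by rewrite -big_mkcondr; apply: eq_bigl => k; rewrite andb_idl // => /(subsetP sAB).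
have : \sum_(k in B) (#|A :\ k| + (k \in A)) = #|B| * #|A|.
  by rewrite -sum_nat_const; apply: eq_bigr => k _; rewrite addnC -cardsD1.
rewrite big_split /= sum_in -subn1 mulnBr muln1 mulnC; lia.
Qed.

Lemma sum_card_notin (T : finType) (P : pred {set T}) (f : {set T} -> nat) :
  \sum_(v : T) \sum_(S | P S && (v \notin S)) f S = \sum_(S | P S) #|~: S| * f S.
Proof.
rewrite (exchange_big_dep P) /= => [|v S _ /andP[] //].
apply: eq_bigr => S PS.
by rewrite sum_nat_const; congr (_ * _); apply: eq_card => v; rewrite !inE PS.
Qed.

Lemma sum_setU1 (T : finType) n (f : {set T} -> nat) :
  \sum_(C : {set T} | #|C| == n) \sum_(k | k \notin C) f (k |: C) =
  \sum_(S : {set T} | #|S| == n.+1) #|S| * f S.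
Proof.
rewrite (exchange_big_dep xpredT) //=.
rewrite (eq_bigr (fun S : {set T} => \sum_(k in S) f S)) => [|S _]; last first.
  by rewrite sum_nat_const.
rewrite [RHS](exchange_big_dep xpredT) //=; apply: eq_bigr => k _.
rewrite [RHS](reindex_onto (fun C => k |: C) (fun S => S :\ k)) /=; last first.
  by move=> S /andP[_ kS]; rewrite setD1K.
apply: eq_bigl => C; rewrite setU11 andbT cardsU1.
case: (boolP (k \in C)) => [kC | kNC]; last by rewrite setU1K // eqxx !andbT.
rewrite andbF; apply/esym/negbTE/andP => -[_ /eqP eqC].
by move: kC; rewrite -eqC setD11.
Qed.

Definition block_xor b (x y : block b) : block b := [tuple tnth x i (+) tnth y i | i < b].
Definition block0 b : block b := [tuple false | i < b].

Lemma block_xorA b : associative (@block_xor b).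
Proof. by move=> x y z; apply: eq_from_tnth => i; rewrite !tnth_mktuple addbA. Qed.

Lemma block_xorC b : commutative (@block_xor b).
Proof. by move=> x y; apply: eq_from_tnth => i; rewrite !tnth_mktuple addbC. Qed.

Lemma block0_xor b : left_id (block0 b) (@block_xor b).
Proof. by move=> x; apply: eq_from_tnth => i; rewrite !tnth_mktuple. Qed.

HB.instance Definition _ b :=
  Monoid.isComLaw.Build (block b) (block0 b) (@block_xor b)
    (@block_xorA b) (@block_xorC b) (@block0_xor b).

Lemma block_xorK b (x y : block b) : block_xor (block_xor x y) y = x.
Proof. by apply: eq_from_tnth => i; rewrite !tnth_mktuple -addbA addbb addbF. Qed.

Section CyclicShift.
Variable K : nat.

Definition cshift (a : nat) (x : 'I_K) : 'I_K :=
  Ordinal (ltn_pmod (x + a) (leq_ltn_trans (leq0n x) (ltn_ord x))).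

Lemma cshift_val a x : val (cshift a x) = (x + a) %% K.
Proof. by []. Qed.

Lemma cshift_inj a : injective (cshift a).
Proof.
move=> x y /(congr1 val); rewrite !cshift_val => /eqP.
by rewrite eqn_modDr !modn_small // => /eqP /val_inj.
Qed.

Lemma cshiftC a c x : cshift a (cshift c x) = cshift c (cshift a x).
Proof. by apply: val_inj; rewrite !cshift_val !modnDml -!addnA (addnC a c). Qed.

Lemma cshift_to (u v : 'I_K) : cshift (v + (K - u)) u = v.
Proof.
apply: val_inj; rewrite cshift_val addnCA addnBA; last exact: ltnW.
by rewrite (addnC u) addnK -modnDmr modnn addn0 modn_small.
Qed.

End CyclicShift.

Section DeliveryFrame.
Variables (N K tbar : nat).
Variable npk : {set 'I_K} -> nat.
Variable senders : {set 'I_K} -> {set 'I_K}.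
Variable rounds : {set 'I_K} -> nat.
Hypothesis senders_out :
  forall C : {set 'I_K}, #|C| = tbar.-1 -> senders C \subset ~: C.
Hypothesis senders_load : forall (C : {set 'I_K}) k, #|C| = tbar.-1 -> k \notin C ->
  #|senders C :\ k| * rounds C = npk (k |: C).

Local Notation maxpk := (\max_(S : {set 'I_K}) npk S).
Local Notation label := ({set 'I_K} * 'I_maxpk.+1)%type.
Local Notation slot := ({set 'I_K} * 'I_(\max_(C : {set 'I_K}) rounds C))%type.

(* Label [(S, l)]: the users in [S] do not cache the packet, and [l < npk S]. *)
Definition is_packet (x : label) := (#|x.1| == tbar) && (x.2 < npk x.1).
Definition packets := [seq x : label <- index_enum label | is_packet x].
Definition subpacketization := size packets.
Local Notation F := subpacketization.

Definition label_of (j : 'I_F) : label := nth (set0, ord0) packets j.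

Definition packet_at (S : {set 'I_K}) (l : nat) : option 'I_F :=
  if is_packet (S, inord l) && (l <= maxpk) then insub (index (S, inord l) packets)
  else None.

Definition placement (k : 'I_K) : {set 'I_N * 'I_F} := [set p | k \notin (label_of p.2).1].

(* Index, among the packets labelled [k |: C], of the one that [s] sends to [k] in round [r]. *)
Definition position (C : {set 'I_K}) k s r :=
  index s (enum (senders C :\ k)) * rounds C + r.

Definition slots s := [seq x : slot <- index_enum slot |
  (#|x.1| == tbar.-1) && (s \in senders x.1) && (x.2 < rounds x.1)].

Definition slot_index s C r :=
  find (fun x : slot => (x.1 == C) && (nat_of_ord x.2 == r)) (slots s).

Lemma label_ofP j : is_packet (label_of j).
Proof. by have := mem_nth (set0, ord0) (ltn_ord j); rewrite mem_filter => /andP[]. Qed.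

Lemma packet_at_label j : packet_at (label_of j).1 (label_of j).2 = Some j.
Proof.
rewrite /packet_at inord_val -surjective_pairing label_ofP -ltnS ltn_ord /=.
by rewrite index_uniq ?filter_uniq ?index_enum_uniq // valK.
Qed.

Lemma packet_at_set S l j : packet_at S l = Some j -> (label_of j).1 = S.
Proof.
rewrite /packet_at; case: ifP => // /andP[Sl _].
case: insubP => // j' _ val_j' [<-].
by rewrite /label_of val_j' nth_index // mem_filter Sl mem_index_enum.
Qed.

Lemma missing_packet_sender k j (S := (label_of j).1) (l := nat_of_ord (label_of j).2)
    (C := S :\ k) (s := nth k (enum (senders C :\ k)) (l %/ rounds C)) :
  k \in S -> [/\ #|C| = tbar.-1, s \in senders C :\ k, l %% rounds C < rounds C
    & packet_at (k |: C) (position C k s (l %% rounds C)) = Some j].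
Proof.
move=> kS; have /andP[/eqP cardS l_lt] := label_ofP j.
have kC : k |: C = S by rewrite setD1K.
have cardC : #|C| = tbar.-1 by rewrite -cardS (cardsD1 k S) kS.
have l_lt' : l < #|senders C :\ k| * rounds C by rewrite senders_load ?setD11 // kC.
have rounds_gt0 : 0 < rounds C by move: l_lt'; case: (rounds C); rewrite ?muln0.
have s_in : s \in senders C :\ k by rewrite -mem_enum mem_nth // -cardE ltn_divLR.
split=> //; first by rewrite ltn_pmod.
by rewrite /position index_uniq ?enum_uniq -?divn_eq ?kC ?packet_at_label // -cardE ltn_divLR.
Qed.

Section Coding.
Variable b : nat.

Definition lookup (c : 'I_N * 'I_F -> option (block b)) n (oj : option 'I_F) :=
  if oj is Some j then odflt (block0 b) (c (n, j)) else block0 b.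

Definition file_packet (W : library N F b) n (oj : option 'I_F) :=
  if oj is Some j then W n j else block0 b.

Definition coded_block (d : demand N K) s c (C : {set 'I_K}) r : block b :=
  \big[@block_xor b/block0 b]_(k | (k \notin C) && (k != s))
     lookup c (d k) (packet_at (k |: C) (position C k s r)).

Definition encoder (d : demand N K) s c :=
  [seq coded_block d s c x.1 x.2 | x : slot <- slots s].

Definition decoder (d : demand N K) k c (received : 'I_K -> seq (block b)) j :=
  let S := (label_of j).1 in let l := nat_of_ord (label_of j).2 in
  if k \notin S then lookup c (d k) (Some j) else
  let C := S :\ k in
  let s := nth k (enum (senders C :\ k)) (l %/ rounds C) in
  let r := l %% rounds C in
  block_xor (nth (block0 b) (received s) (slot_index s C r))
    (\big[@block_xor b/block0 b]_(k' | (k' \notin C) && (k' != s) && (k' != k))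
       lookup c (d k') (packet_at (k' |: C) (position C k' s r))).

Definition frame_scheme : D2D_scheme N K F b :=
  {| Zset := placement; ell := fun _ s => size (slots s); enc := encoder; dec := decoder |}.

Lemma lookup_cache u W n oj : (forall j, oj = Some j -> u \notin (label_of j).1) ->
  lookup (cache_of (placement u) W) n oj = file_packet W n oj.
Proof. by case: oj => [j /(_ j erefl) uNj|] //=; rewrite /cache_of inE uNj. Qed.

Lemma nth_encoder (d : demand N K) s c (C : {set 'I_K}) r :
  #|C| = tbar.-1 -> s \in senders C -> r < rounds C ->
  nth (block0 b) (encoder d s c) (slot_index s C r) = coded_block d s c C r.
Proof.
move=> cardC sC r_lt.
have r_lt' : r < \max_(C : {set 'I_K}) rounds C by apply: leq_trans r_lt (leq_bigmax C).
pose x : slot := (C, Ordinal r_lt').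
have has_x : has (fun x : slot => (x.1 == C) && (nat_of_ord x.2 == r)) (slots s).
  by apply/hasP; exists x; rewrite ?mem_filter /= ?cardC ?eqxx ?sC ?r_lt ?mem_index_enum.
rewrite /encoder (nth_map x) -?has_find //.
by case/andP: (nth_find x has_x) => /eqP -> /eqP ->.
Qed.

Lemma decoder_correct d k W j :
  decoder d k (cache_of (placement k) W)
    (fun k' => if k' == k then [::] else encoder d k' (cache_of (placement k') W)) j
  = W (d k) j.
Proof.
rewrite /decoder; case: ifPn => [kNS | /negPn kS]; first by rewrite lookup_cache // => _ [<-].
have [cardC /setD1P[sNk sC] r_lt packet_k] := missing_packet_sender kS.
set C := _ :\ k in cardC sNk sC r_lt packet_k *.
set s := nth k _ _ in sNk sC packet_k *; set r := _ %% _ in r_lt packet_k *.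
have sNC : s \notin C by have := subsetP (senders_out cardC) s sC; rewrite inE.
have to_file u k' : u \notin C -> k' != u ->
    lookup (cache_of (placement u) W) (d k') (packet_at (k' |: C) (position C k' s r))
    = file_packet W (d k') (packet_at (k' |: C) (position C k' s r)).
  move=> uNC k'Nu; apply: lookup_cache => j' /packet_at_set ->.
  by rewrite in_setU1 negb_or eq_sym k'Nu.
have kNs : k != s by rewrite eq_sym.
rewrite (negbTE sNk) nth_encoder // /coded_block (bigD1 k) /=; last by rewrite setD11.
rewrite (to_file s k sNC kNs) packet_k /=.
under [X in block_xor _ X]eq_bigr => k' /andP[_ k'Nk] do rewrite to_file ?setD11 //.
under eq_bigr => k' /andP[/andP[_ k'Ns] _] do rewrite to_file //.
exact: block_xorK.
Qed.

End Coding.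

Lemma card_packets_with (Q : pred {set 'I_K}) :
  #|[set j : 'I_F | Q (label_of j).1]| =
  \sum_(S : {set 'I_K} | (#|S| == tbar) && Q S) npk S.
Proof.
rewrite -sum1_card (eq_bigl (fun j : 'I_F => Q (nth (set0, ord0) packets j).1)) => [|j];
  last by rewrite inE.
rewrite -(big_mkord (fun j => Q (nth (set0, ord0) packets j).1) (fun _ => 1)).
rewrite -(@big_nth _ _ _ _ (set0, ord0) packets (fun x : label => Q x.1) (fun _ => 1)).
rewrite big_filter_cond.
rewrite (eq_bigl (fun x : label => (#|x.1| == tbar) && Q x.1 && (x.2 < npk x.1))) => [|x];
  last by rewrite /is_packet andbAC.
rewrite -(pair_big_dep (fun S : {set 'I_K} => (#|S| == tbar) && Q S)
  (fun (S : {set 'I_K}) (l : 'I_maxpk.+1) => l < npk S) (fun _ _ => 1)).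
by apply: eq_bigr => S _; rewrite sum_ord_lt_const ?muln1 // leqW // leq_bigmax.
Qed.

Lemma subpacketization_sum : F = \sum_(S : {set 'I_K} | #|S| == tbar) npk S.
Proof.
have := card_packets_with xpredT.
rewrite (eq_bigl (fun S : {set 'I_K} => #|S| == tbar)) => [<- | S]; last by rewrite andbT.
by rewrite -[LHS]card_ord; apply: eq_card => j; rewrite !inE.
Qed.

Definition cached_count (u : 'I_K) :=
  \sum_(S : {set 'I_K} | (#|S| == tbar) && (u \notin S)) npk S.

Lemma card_placement u : #|placement u| = N * cached_count u.
Proof.
rewrite /cached_count -(card_packets_with (fun S => u \notin S)).
have -> : placement u = setX [set: 'I_N] [set j | u \notin (label_of j).1].
  by apply/setP => -[n j]; rewrite !inE.
by rewrite cardsX cardsT card_ord.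
Qed.

Lemma load_sum :
  \sum_s size (slots s) = \sum_(C : {set 'I_K} | #|C| == tbar.-1) #|senders C| * rounds C.
Proof.
under eq_bigr => s _ do rewrite size_filter -sum1_count.
rewrite (exchange_big_dep (fun x : slot => (#|x.1| == tbar.-1) && (x.2 < rounds x.1))) /=;
  last by move=> s x _ /andP[/andP[-> _] ->].
rewrite (eq_bigr (fun x : slot => #|senders x.1|)) => [|x /andP[cardx ltx]]; last first.
  by rewrite -sum1_card; apply: eq_bigl => s; rewrite cardx ltx andbT.
rewrite -(pair_big_dep (fun C : {set 'I_K} => #|C| == tbar.-1)
  (fun (C : {set 'I_K}) (r : 'I_(\max_(C : {set 'I_K}) rounds C)) => r < rounds C)
  (fun C _ => #|senders C|)) /=.
by apply: eq_bigr => C _; rewrite sum_ord_lt_const ?leq_bigmax // mulnC.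
Qed.

Hypothesis tbar_gt0 : 0 < tbar.
Hypothesis tbar_lt : tbar < K.

(* A sender of [C] lies outside [C] and serves every user outside [C] but itself. *)
Lemma sum_npk_setU1 (C : {set 'I_K}) : #|C| = tbar.-1 ->
  \sum_(k | k \notin C) npk (k |: C) = (K - tbar) * (#|senders C| * rounds C).
Proof.
move=> cardC; rewrite mulnA -[_ * #|_|]mulnC.
have -> : K - tbar = #|~: C|.-1 by have := cardsC C; rewrite card_ord cardC; lia.
rewrite -sum_card_setD1 ?senders_out // big_distrl /=.
by apply: eq_big => [k | k kNC]; rewrite ?inE // senders_load.
Qed.

Lemma load_double_count : (K - tbar) * \sum_s size (slots s) = tbar * F.
Proof.
rewrite load_sum big_distrr /= -(eq_bigr _ (fun C cardC => sum_npk_setU1 (eqP cardC))).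
rewrite sum_setU1 prednK // subpacketization_sum big_distrr /=.
by apply: eq_bigr => S /eqP ->.
Qed.

Hypothesis npk_cshift : forall a (S : {set 'I_K}), npk (cshift a @: S) = npk S.

Lemma cached_count_cshift u v : cached_count u = cached_count v.
Proof.
rewrite -(cshift_to u v) /cached_count; set a := v + (K - u).
rewrite [RHS](reindex_inj (imset_inj (@cshift_inj K a))) /=.
apply: eq_big => [S | S _]; last by rewrite npk_cshift.
by rewrite (card_imset _ (@cshift_inj K a)) (mem_imset _ _ (@cshift_inj K a)).
Qed.

Lemma cached_count_total u : K * cached_count u = (K - tbar) * F.
Proof.
rewrite -[in LHS](card_ord K) -sum_nat_const (eq_bigr _ (fun v _ => cached_count_cshift u v)).
rewrite sum_card_notin subpacketization_sum big_distrr /=.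
apply: eq_bigr => S /eqP cardS; congr (_ * _).
by have := cardsC S; rewrite card_ord cardS => sumK; rewrite -[in RHS]sumK addKn.
Qed.

Section Rates.
Local Open Scope ring_scope.
Variable M : rat.
Hypothesis M_def : M = (K - tbar)%:R * N%:R / K%:R.

Lemma placement_size k : #|placement k|%:R = M * F%:R.
Proof.
have K_neq0 : K%:R != 0 :> rat by rewrite pnatr_eq0 -lt0n (ltn_trans tbar_gt0).
apply: (mulIf K_neq0); rewrite -natrM card_placement -mulnA [(_ * K)%N]mulnC.
by rewrite cached_count_total M_def !natrM; field.
Qed.

Lemma frame_rate b : (0 < N)%N -> (0 < F)%N -> scheme_rate (frame_scheme b) = N%:R / M - 1.
Proof.
move=> N_gt0 F_gt0; rewrite /scheme_rate /= (bigop.bigmax_eq_arg [ffun=> Ordinal N_gt0]) //.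
have Kt_neq0 : (K - tbar)%:R != 0 :> rat by rewrite pnatr_eq0 subn_eq0 -ltnNge.
have /(congr1 (fun n => n%:R : rat)) := load_double_count; rewrite !natrM => load_eq.
rewrite -(mulKf Kt_neq0 (_%:R)) load_eq M_def natrB ?(ltnW tbar_lt) //.
field; rewrite -natrB ?(ltnW tbar_lt) // Kt_neq0 !pnatr_eq0 -!lt0n N_gt0 F_gt0.
by rewrite (ltn_trans tbar_gt0).
Qed.

Lemma frame_achievable : (0 < N)%N -> (0 < F)%N -> achievable N K M F (N%:R / M - 1).
Proof.
move=> N_gt0 F_gt0; split=> // b _; exists (frame_scheme b); split; last exact: frame_rate.
split=> [k | d k W | d k W j]; first by rewrite le_eqVlt placement_size eqxx.
  by rewrite /= size_map.
exact: decoder_correct.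
Qed.

End Rates.

End DeliveryFrame.

Lemma sum_const_card_eq K n c : \sum_(S : {set 'I_K} | #|S| == n) c = 'C(K, n) * c.
Proof.
rewrite sum_nat_const; have := card_draws 'I_K n; rewrite card_ord => <-.
by congr (_ * _); apply: eq_card => S; rewrite inE.
Qed.

Lemma jcm_achievable N K tbar (M : rat) : 0 < tbar -> tbar < K -> 0 < N ->
  M = ((K - tbar)%:R * N%:R / K%:R)%R ->
  achievable N K M ((K - tbar) * 'C(K, tbar)) (N%:R / M - 1)%R.
Proof.
move=> tbar_gt0 tbar_lt N_gt0 M_def; pose npk (_ : {set 'I_K}) := K - tbar.
have F_eq : subpacketization tbar npk = (K - tbar) * 'C(K, tbar).
  by rewrite subpacketization_sum sum_const_card_eq mulnC.
have F_gt0 : 0 < subpacketization tbar npk.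
  by rewrite F_eq muln_gt0 subn_gt0 tbar_lt bin_gt0 ltnW.
rewrite -F_eq; apply: (@frame_achievable _ _ _ _ (fun C => ~: C) (fun _ => 1)) => //.
move=> C k cardC kNC; have := cardsC C.
by rewrite muln1 card_ord (cardsD1 k (~: C)) inE kNC cardC /npk; lia.
Qed.

Definition pair_packets h i :=
  (\prod_(1 <= m < i.+1) (2 * m - 1)) * \prod_(i <= m < h) (2 * m).
Definition pair_rounds h i :=
  (\prod_(1 <= m < i.+1) (2 * m - 1)) * \prod_(i.+1 <= m < h) (2 * m).

Lemma pair_packetsS h i : pair_packets h i.+1 = (2 * i).+1 * pair_rounds h i.
Proof.
rewrite /pair_packets /pair_rounds big_nat_recr //= -mulnA mulnCA; congr (_ * _); lia.
Qed.

Lemma pair_packets_rounds h i : i < h -> pair_packets h i = 2 * i * pair_rounds h i.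
Proof. by move=> lt_ih; rewrite /pair_packets /pair_rounds (big_ltn lt_ih) mulnCA. Qed.

Lemma pair_packets_le h i j : i <= j <= h -> pair_packets h i <= pair_packets h j.
Proof.
case/andP; elim: j => [|j IH]; first by rewrite leqn0 => /eqP ->.
rewrite leq_eqVlt ltnS => /orP[/eqP -> // | le_ij lt_jh].
apply: leq_trans (IH le_ij (ltnW lt_jh)) _.
by rewrite pair_packets_rounds // pair_packetsS leq_mul2r leqnSn orbT.
Qed.

Lemma pair_packets_top h : pair_packets h h = \prod_(1 <= m < h.+1) (2 * m - 1).
Proof. by rewrite /pair_packets (big_geq (leqnn h)) muln1. Qed.

Lemma pair_packets_top_gt0 h : 0 < pair_packets h h.
Proof.
by rewrite pair_packets_top big_nat_cond; apply: prodn_cond_gt0 => m /andP[/andP[]]; lia.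
Qed.

Section Pairing.
Variables (K H : nat).
Hypothesis K_double : K = H + H.
Hypothesis H_gt0 : 0 < H.

Local Notation partner := (@cshift K H).

Lemma partner_lt (x : 'I_K) : (partner x < H) = ~~ (x < H).
Proof.
have x_lt := ltn_ord x; rewrite cshift_val; case: (ltnP x H) => le_xH.
  by rewrite modn_small; lia.
have -> : x + H = (x - H) + K by lia.
by rewrite modnDr modn_small; lia.
Qed.

Lemma partnerK : involutive partner.
Proof.
move=> x; apply: val_inj.
by rewrite !cshift_val modnDml -addnA -K_double -modnDmr modnn addn0 modn_small.
Qed.

Lemma partner_neq (x : 'I_K) : partner x != x.
Proof. by apply/eqP => px; have := partner_lt x; rewrite px; case: (x < H). Qed.

Definition unpaired (S : {set 'I_K}) := [set x in S | partner x \notin S].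
Definition pair_senders (C : {set 'I_K}) := [set x | (x \notin C) && (partner x \in C)].

Lemma card_pair_senders (C : {set 'I_K}) : #|pair_senders C| = #|unpaired C|.
Proof.
have -> : pair_senders C = partner @: unpaired C.
  apply/setP => x; rewrite inE; apply/andP/imsetP => [[xNC pxC] | [y]].
    by exists (partner x); rewrite ?inE ?partnerK ?pxC.
  by rewrite inE => /andP[yC pyNC] ->; rewrite partnerK.
exact/card_imset/cshift_inj.
Qed.

(* The members of [C] whose partner is also in [C] come in pairs. *)
Lemma odd_card_unpaired (C : {set 'I_K}) : odd #|C| = odd #|unpaired C|.
Proof.
pose P := C :&: [set x | partner x \in C].
pose L := [set x : 'I_K | x < H].
have P_high : P :\: L = partner @: (P :&: L).
  apply/setP => x; rewrite !inE; apply/idP/imsetP => [/and3P[xNL xC pxC] | [y]].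
    by exists (partner x); rewrite ?partnerK // !inE partnerK pxC xC partner_lt xNL.
  by rewrite !inE => /andP[/andP[yC pyC] yL] ->; rewrite partner_lt yL partnerK yC pyC.
have cardP : #|P :&: L| + #|P :\: L| = #|P| by apply: cardsID.
rewrite P_high card_imset ?addnn in cardP; last exact: cshift_inj.
rewrite -(cardsID [set x | partner x \in C] C) -/P -cardP oddD odd_double /=.
by rewrite (_ : C :\: _ = unpaired C) //; apply/setP => x; rewrite !inE andbC.
Qed.

Lemma unpaired_cshift a (S : {set 'I_K}) : unpaired (cshift a @: S) = cshift a @: unpaired S.
Proof.
apply/setP => x; apply/idP/imsetP => [| [y]].
  rewrite inE => /andP[/imsetP[y yS ->] pNS]; exists y => //; rewrite inE yS /=.
  by apply: contra pNS => pyS; rewrite cshiftC imset_f.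
rewrite inE => /andP[yS pyNS] ->.
by rewrite inE imset_f //= cshiftC (mem_imset _ _ (@cshift_inj K a)).
Qed.

Lemma unpaired_setU1 (C : {set 'I_K}) k : k \notin C -> partner k \notin C ->
  unpaired (k |: C) = k |: unpaired C.
Proof.
move=> kNC pkNC; apply/setP => x; rewrite !inE.
case: (eqVneq x k) => [-> | xNk] /=; first by rewrite (negbTE (partner_neq k)) pkNC.
apply: andb_id2l => xC; congr negb; rewrite orb_idl // => /eqP px.
by move: pkNC; rewrite -px partnerK xC.
Qed.

Lemma unpaired_setU1_partner (C : {set 'I_K}) k : k \notin C -> partner k \in C ->
  unpaired (k |: C) = unpaired C :\ partner k.
Proof.
move=> kNC pkC; apply/setP => x; rewrite !inE.
case: (eqVneq x k) => [-> | xNk] /=; first by rewrite pkC orbT (negbTE kNC) andbF.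
case: (eqVneq x (partner k)) => [-> | xNpk] /=; first by rewrite partnerK eqxx andbF.
by rewrite (_ : (partner x == k) = false) //; apply: contraNF xNpk => /eqP <-; rewrite partnerK.
Qed.

Variable h : nat.
Hypothesis h_gt0 : 0 < h.

Definition pair_npk (S : {set 'I_K}) := pair_packets h #|unpaired S|./2.

Lemma pair_senders_load (C : {set 'I_K}) k : #|C| = (h + h).-1 -> k \notin C ->
  #|pair_senders C :\ k| * pair_rounds h #|unpaired C|./2 = pair_npk (k |: C).
Proof.
move=> cardC kNC; rewrite /pair_npk.
have U_le : #|unpaired C| <= (h + h).-1.
  by rewrite -cardC subset_leq_card //; apply/subsetP => x; rewrite inE => /andP[].
have := odd_double_half #|unpaired C|; rewrite -odd_card_unpaired cardC.
have -> : (h + h).-1 = (h.-1).*2.+1 by rewrite -addnn; lia.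
rewrite /= odd_double /= -mul2n; move: #|unpaired C|./2 => i U_eq.
have i_lt : i < h by move: U_le; rewrite -U_eq; lia.
have := card_pair_senders C; rewrite (cardsD1 k (pair_senders C)) inE kNC /=.
case: (boolP (partner k \in C)) => pkC /= cardS.
- have pkU : partner k \in unpaired C by rewrite inE pkC partnerK kNC.
  have cardU : #|unpaired C :\ partner k| = i.*2.
    by move: U_eq; rewrite (cardsD1 (partner k)) pkU mul2n => /addnI.
  rewrite unpaired_setU1_partner // cardU half_double pair_packets_rounds //.
  congr (_ * _); move: cardS.
  by rewrite (cardsD1 (partner k) (unpaired C)) pkU cardU -mul2n => /addnI.
- have kNU : k \notin unpaired C by rewrite inE (negbTE kNC).
  rewrite unpaired_setU1 // cardsU1 kNU -U_eq (_ : _ + _ = i.+1.*2) ?half_double;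
    last by rewrite -mul2n; lia.
  by move: cardS; rewrite pair_packetsS -U_eq add0n => ->.
Qed.

Lemma pair_npk_le (S : {set 'I_K}) :
  #|S| = h + h -> pair_npk S <= \prod_(1 <= m < h.+1) (2 * m - 1).
Proof.
move=> cardS; rewrite /pair_npk -pair_packets_top; apply: pair_packets_le; rewrite leqnn andbT.
have : #|unpaired S| <= h + h.
  by rewrite -cardS subset_leq_card //; apply/subsetP => x; rewrite inE => /andP[].
by move/half_leq; rewrite addnn half_double.
Qed.

Lemma pair_subpacketization_le :
  subpacketization (h + h) pair_npk <= 'C(K, h + h) * \prod_(1 <= m < h.+1) (2 * m - 1).
Proof.
rewrite subpacketization_sum -sum_const_card_eq; apply: leq_sum => S /eqP; exact: pair_npk_le.
Qed.

Hypothesis h_le : h + h <= H.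

Lemma pair_subpacketization_gt0 : 0 < subpacketization (h + h) pair_npk.
Proof.
pose S0 := [set x : 'I_K | x < h + h].
have cardS0 : #|S0| = h + h.
  rewrite -sum1_card (eq_bigl (fun x : 'I_K => x < h + h)) => [|x]; last by rewrite inE.
  by rewrite sum_ord_lt_const ?muln1 // (leq_trans h_le) // K_double leq_addl.
have unpairedS0 : unpaired S0 = S0.
  apply/setP => x; rewrite !inE; apply: andb_idr => x_lt; apply/negP => px_lt.
  by move: (partner_lt x); rewrite (leq_trans px_lt h_le) (leq_trans x_lt h_le).
rewrite subpacketization_sum (bigD1 S0) ?cardS0 //= /pair_npk unpairedS0 cardS0.
by rewrite addnn half_double ltn_addr // pair_packets_top_gt0.
Qed.

Lemma pair_achievable N (M : rat) : 0 < N -> M = ((K - (h + h))%:R * N%:R / K%:R)%R ->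
  achievable N K M (subpacketization (h + h) pair_npk) (N%:R / M - 1)%R.
Proof.
move=> N_gt0 M_def.
apply: (@frame_achievable _ _ _ _ pair_senders (fun C => pair_rounds h #|unpaired C|./2)) => //.
- by move=> C _; apply/subsetP => x; rewrite !inE => /andP[].
- exact: pair_senders_load.
- by rewrite addn_gt0 h_gt0.
- by rewrite K_double (leq_ltn_trans h_le) // -addn1 leq_add2l.
- by move=> a S; rewrite /pair_npk unpaired_cshift card_imset //; apply: cshift_inj.
- exact: pair_subpacketization_gt0.
Qed.

End Pairing.

Lemma ratio_bound (F C t P : nat) : 0 < t -> 0 < C -> F <= C * minn P t ->
  F <= t * C /\ (F%:R / (t * C)%:R <= Num.min (P%:R / t%:R) 1 :> rat)%R.
Proof.
move=> t_gt0 C_gt0 le_F.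
have le_Ft : F <= t * C by rewrite mulnC (leq_trans le_F) // leq_mul2l geq_minr orbT.
have tC_gt0 : (0 < (t * C)%:R :> rat)%R by rewrite ltr0n muln_gt0 t_gt0.
split=> //; rewrite le_min !ler_pdivrMr // mul1r ler_nat le_Ft andbT.
rewrite natrM mulrA divfK ?pnatr_eq0 -?lt0n // -natrM ler_nat mulnC.
by rewrite (leq_trans le_F) // leq_mul2l geq_minl orbT.
Qed.

Theorem theorem1 (N K : nat) (M : rat) (t : nat) :
  (1 <= N)%N -> (2 <= K)%N -> (0 < M)%R -> (M <= N%:R)%R ->
  (t%:R = K%:R * M / N%:R :> rat)%R -> (0 < t)%N ->
  (4 <= K)%N -> ~~ odd K ->
  ~~ odd (K - t) -> (2 <= K - t)%N -> (K - t <= K %/ 2)%N ->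
  exists F : nat,
    achievable N K M F (N%:R / M - 1)%R /\
    (F <= F_JCM K t)%N /\
    (F%:R / (F_JCM K t)%:R <=
       Num.min ((\prod_(1 <= i < ((K - t) %/ 2).+1) (2 * i - 1))%:R / t%:R) 1
       :> rat)%R.
Proof.
move=> N_gt0 _ _ _ t_def t_gt0 _ K_even tbar_even tbar_ge2 tbar_le.
have [H K_double] : exists H, K = H + H.
  by exists K./2; rewrite addnn -[LHS]odd_double_half (negbTE K_even).
have [h tbar_double] : exists h, K - t = h + h.
  by exists (K - t)./2; rewrite addnn -[LHS]odd_double_half (negbTE tbar_even).
have le_tK : t <= K by lia.
have M_def : M = ((K - (K - t))%:R * N%:R / K%:R)%R.
  rewrite (subKn le_tK) t_def; field.
  by rewrite !pnatr_eq0 -!lt0n N_gt0 (leq_trans t_gt0).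
pose P := \prod_(1 <= i < ((K - t) %/ 2).+1) (2 * i - 1).
have [F [achF le_F]] : exists F, achievable N K M F (N%:R / M - 1)%R /\ F <= 'C(K, t) * minn P t.
  case: (ltnP P t) => [P_lt | t_le]; last first.
    have := @jcm_achievable N K (K - t) M ltac:(lia) ltac:(lia) N_gt0 M_def.
    rewrite (subKn le_tK) (bin_sub le_tK) => achF.
    by exists (t * 'C(K, t)); split; last rewrite mulnC.
  rewrite tbar_double in M_def; exists (subpacketization (h + h) (@pair_npk K H h)).
  split; first by apply: pair_achievable => //; lia.
  rewrite /P -(bin_sub le_tK) tbar_double.
  by rewrite (_ : (h + h) %/ 2 = h) ?pair_subpacketization_le //; lia.
by exists F; split=> //; apply: ratio_bound => //; rewrite bin_gt0.
Qed.
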